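(* Let $m\ge3$ be odd and $n\ge2$. The set $\mathrm{SPSD}_{m,n}$ is a closed convex cone. Moreover, if $\mathcal{A},\mathcal{B}\in\mathrm{SPSD}_{3,n}$, then their Hadamard product $\mathcal{C}=\mathcal{A}\circ\mathcal{B}$ (entrywise product, $c_{ijk}=a_{ijk}b_{ijk}$) belongs to $\mathrm{SPSD}_{3,n}$; and if $\mathcal{A},\mathcal{B}\in\mathrm{SPD}_{3,n}$, then $\mathcal{C}\in\mathrm{SPD}_{3,n}$.
   Context: For a symmetric $m$th order $n$-dimensional real tensor $\mathcal{A}$ and $\mathbf{x}\in\mathbb{R}^n$, $\mathcal{A}\mathbf{x}^{m-1}$ is the vector with $i$th component $\sum_{i_2,\dots,i_m}a_{ii_2\dots i_m}x_{i_2}\cdots x_{i_m}$. For odd $m$, $\mathrm{SPSD}_{m,n}$ is the set of real symmetric $m$th order $n$-dimensional tensors $\mathcal{A}$ with $\mathcal{A}\mathbf{x}^{m-1}\ge\mathbf{0}$ componentwise for all $\mathbf{x}\in\mathbb{R}^n$ (strongly positive semi-definite tensors), and $\mathrm{SPD}_{m,n}$ is the set of those with $\mathcal{A}\mathbf{x}^{m-1}>\mathbf{0}$ componentwise for all nonzero $\mathbf{x}$ (strongly positive definite tensors). *)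

From HB Require Import structures.
From mathcomp Require Import all_boot all_order all_algebra all_fingroup.
From mathcomp Require Import all_classical all_reals all_analysis.
Set Implicit Arguments. Unset Strict Implicit. Unset Printing Implicit Defensive.
Import Order.TTheory GRing.Theory Num.Theory.
Import numFieldNormedType.Exports.
Local Open Scope ring_scope.

(* Closedness is taken in the pointwise (= product) topology {ptws T -> R}, which
   (finite index set) is the Euclidean topology on R^(n^m). *)
Notation tensor R m n := ({ffun 'I_m -> 'I_n} -> R) (only parsing).

Definition symmetric_tensor (R : realType) (m n : nat) (A : tensor R m n) :=
  forall (s : 'S_m) (f : {ffun 'I_m -> 'I_n}), A [ffun k => f (s k)] = A f.

(* (A x^{m-1})_i = sum_{i_2..i_m} a_{i i_2 .. i_m} x_{i_2} ... x_{i_m}: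
   sum over all index functions whose first index (position 0) is i. *)
Definition tvec (R : realType) (m n : nat) (A : tensor R m n) (x : 'I_n -> R)
  (i : 'I_n) : R :=
  \sum_(f : {ffun 'I_m -> 'I_n} | [forall k : 'I_m, (val k == 0%N) ==> (f k == i)])
     A f * \prod_(k : 'I_m | val k != 0%N) x (f k).

Definition SPSD (R : realType) (m n : nat) : set (tensor R m n) :=
  [set A | symmetric_tensor A /\ forall (x : 'I_n -> R) (i : 'I_n), 0 <= tvec A x i].

Definition SPD (R : realType) (m n : nat) : set (tensor R m n) :=
  [set A | symmetric_tensor A /\
     forall (x : 'I_n -> R), x != (fun _ => 0) -> forall i : 'I_n, 0 < tvec A x i].

Definition hadamard (R : realType) (m n : nat) (A B : tensor R m n) : tensor R m n :=
  fun f => A f * B f.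
Arguments SPSD : clear implicits.
Arguments SPD : clear implicits.

From HB Require Import structures.
From mathcomp Require Import all_boot all_order all_algebra all_fingroup.
From mathcomp Require Import all_classical all_reals all_analysis.
From mathcomp Require Import ring.
Import Order.TTheory GRing.Theory Num.Theory.
Import numFieldNormedType.Exports.
Local Open Scope ring_scope.

(* For m = 3 the i-th entry of A x^2 is the quadratic form x^T A_i x of the symmetric
   slice A_i = (a_ijl)_jl, and the Hadamard product of tensors acts slice by slice, so
   both Hadamard claims reduce to the Schur product theorem for matrices.  For that,
   write a PSD matrix C as a sum of rank-one matrices v v^T (peel off the row of one
   pivot p at a time: C - C_p C_p^T / c_pp is again PSD and vanishes in row p; a zero
   pivot forces a zero row); then x^T (A o C) x = sum_v (x o v)^T A (x o v).  If A is
   PD, x_j <> 0 and c_jj = sum_v v_j^2 > 0, some x o v is nonzero, giving positivity.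
   The cone properties come from the linearity of A |-> A x^(m-1), and SPSD is closed
   as an intersection of preimages of closed sets under continuous finite sums. *)

Section QuadraticForms.
Context {R : rcfType} {n : nat}.
Implicit Types (A B C : 'I_n -> 'I_n -> R) (u x y z : 'I_n -> R) (p : 'I_n).

Definition bform B y z := \sum_j \sum_l B j l * (y j * z l).
Definition qform B y := bform B y y.
Definition symmetric_form B := forall j l, B j l = B l j.
Definition psd_form B := forall y, 0 <= qform B y.
Definition pd_form B := forall y, y != (fun _ => 0) -> 0 < qform B y.
Definition delta_vec p (t : R) k := if k == p then t else 0.

Lemma sum_delta_vecr (F : 'I_n -> R) p t : \sum_k F k * delta_vec p t k = F p * t.
Proof.
rewrite (bigD1 p) //= /delta_vec eqxx big1 ?addr0 // => k /negbTE ->.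
exact: mulr0.
Qed.

Lemma bform_delta_vecr B y p t :
  bform B y (delta_vec p t) = t * \sum_j B j p * y j.
Proof.
rewrite /bform mulr_sumr; apply: eq_bigr => j _.
under eq_bigr => l _ do rewrite mulrA [_ * y j]mulrC -mulrA.
by rewrite -mulr_sumr sum_delta_vecr; ring.
Qed.

Lemma bform_delta_vecl B z p t :
  bform B (delta_vec p t) z = t * \sum_l B p l * z l.
Proof.
rewrite /bform (eq_bigr (fun j => (\sum_l B j l * z l) * delta_vec p t j)).
  by rewrite sum_delta_vecr mulrC.
by move=> j _; rewrite mulr_suml; apply: eq_bigr => l _; rewrite mulrCA mulrC.
Qed.

Lemma qform_delta_vec B p t : qform B (delta_vec p t) = t ^+ 2 * B p p.
Proof. by rewrite /qform bform_delta_vecl sum_delta_vecr; ring. Qed.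

Lemma bformC B y z : symmetric_form B -> bform B y z = bform B z y.
Proof.
move=> sB; rewrite /bform exchange_big; apply: eq_bigr => j _.
by apply: eq_bigr => l _; rewrite sB [y _ * _]mulrC.
Qed.

Lemma qformD B y z : symmetric_form B ->
  qform B (fun k => y k + z k) = qform B y + 2 * bform B y z + qform B z.
Proof.
move=> sB; rewrite mulr2n mulrDl mul1r {2}bformC // /qform /bform -!big_split.
by apply: eq_bigr => j _; rewrite -!big_split; apply: eq_bigr => l _ /=; ring.
Qed.

Lemma qformB B C y : qform (fun j l => B j l - C j l) y = qform B y - qform C y.
Proof.
rewrite /qform /bform -sumrB; apply: eq_bigr => j _.
by rewrite -sumrB; apply: eq_bigr => l _; ring.
Qed.

Lemma qform_rank1 u y : qform (fun j l => u j * u l) y = (\sum_j u j * y j) ^+ 2.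
Proof.
rewrite expr2 mulr_suml /qform /bform; apply: eq_bigr => j _.
by rewrite mulr_sumr; apply: eq_bigr => l _; ring.
Qed.

Lemma psd_form_diag_ge0 B p : psd_form B -> 0 <= B p p.
Proof. by move=> /(_ (delta_vec p 1)); rewrite qform_delta_vec expr1n mul1r. Qed.

Lemma delta_vec_neq0 p t : t != 0 -> delta_vec p t != (fun _ => 0).
Proof.
move=> t_neq0; apply/eqP => /(congr1 (@^~ p)) /=; rewrite /delta_vec eqxx.
exact/eqP.
Qed.

Lemma pd_form_diag_gt0 B p : pd_form B -> 0 < B p p.
Proof.
move=> /(_ _ (@delta_vec_neq0 p 1 (oner_neq0 R))).
by rewrite qform_delta_vec expr1n mul1r.
Qed.

Lemma pd_form_psd B : pd_form B -> psd_form B.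
Proof.
move=> pdB y; have [->|y_neq0] := eqVneq y (fun _ => 0); last exact/ltW/pdB.
by rewrite /qform /bform big1 // => j _; rewrite big1 // => l _ /=; rewrite mul0r mulr0.
Qed.

Lemma psd_form_row_eq0 B p : symmetric_form B -> psd_form B -> B p p = 0 ->
  forall j, B p j = 0.
Proof.
move=> sB psdB Bpp0 j; have [->//|_] := eqVneq j p.
have ge0 t : 0 <= B j j + 2 * t * B p j.
  have := psdB (fun k => delta_vec j 1 k + delta_vec p t k).
  rewrite qformD // !qform_delta_vec bform_delta_vecl sum_delta_vecr Bpp0.
  by rewrite (sB j p); congr (0 <= _); ring.
apply/eqP/negP => /negP Bpj_neq0.
have := ge0 (- (B j j + 1) / (2 * B p j)).
have -> : B j j + 2 * (- (B j j + 1) / (2 * B p j)) * B p j = -1 by field.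
by rewrite oppr_ge0 ler10.
Qed.

Definition pivot_vec B p : {ffun 'I_n -> R} := [ffun k => B p k / Num.sqrt (B p p)].
Definition schur_compl B p j l := B j l - pivot_vec B p j * pivot_vec B p l.

Lemma schur_compl_sym B p : symmetric_form B -> symmetric_form (schur_compl B p).
Proof. by move=> sB j l; rewrite /schur_compl sB mulrC. Qed.

Lemma schur_compl_psd B p : symmetric_form B -> psd_form B -> 0 < B p p ->
  psd_form (schur_compl B p).
Proof.
move=> sB psdB Bpp_gt0 y; set w := \sum_j B j p * y j.
have sqrtBpp : Num.sqrt (B p p) ^+ 2 = B p p by rewrite sqr_sqrtr // ltW.
have -> : qform (schur_compl B p) y = qform B y - w ^+ 2 / B p p.
  rewrite qformB qform_rank1 /w.
  under eq_bigr => j _ do rewrite ffunE (sB p j) mulrAC.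
  by rewrite -mulr_suml expr_div_n sqrtBpp.
have := psdB (fun k => y k + delta_vec p (- (w / B p p)) k).
rewrite qformD // qform_delta_vec bform_delta_vecr -/w.
by congr (0 <= _); field; rewrite gt_eqF.
Qed.

Lemma schur_compl_pivot_row B p : 0 < B p p -> forall l, schur_compl B p p l = 0.
Proof.
move=> Bpp_gt0 l; rewrite /schur_compl !ffunE.
have sqrt_neq0 : Num.sqrt (B p p) != 0 by rewrite sqrtr_eq0 -ltNge.
have -> : B p p / Num.sqrt (B p p) = Num.sqrt (B p p).
  by rewrite -{1}(sqr_sqrtr (ltW Bpp_gt0)) expr2 mulfK.
by rewrite mulrCA mulfV // mulr1 subrr.
Qed.

Lemma schur_compl_zero_row B p j : symmetric_form B ->
  (forall l, B j l = 0) -> forall l, schur_compl B p j l = 0.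
Proof. by move=> sB Bj0 l; rewrite /schur_compl ffunE (sB p j) !Bj0 !mul0r subr0. Qed.

Lemma psd_form_gram_support (S : {set 'I_n}) B : symmetric_form B -> psd_form B ->
  (forall j l, j \notin S -> B j l = 0) ->
  exists s : seq {ffun 'I_n -> R}, forall j l, B j l = \sum_(v <- s) v j * v l.
Proof.
move cardS : #|S| => k; elim: k S cardS B => [|k IH] S cardS B sB psdB suppB.
  by exists [::] => j l; rewrite big_nil suppB // (cards0_eq cardS) inE.
have [p pS] : exists p, p \in S by apply/set0Pn; rewrite -card_gt0 cardS.
have cardSp : #|S :\ p| = k by move: cardS; rewrite (cardsD1 p S) pS add1n => -[].
have suppSp C : (forall l, C p l = 0) -> (forall j l, j \notin S -> C j l = 0) ->
    forall j l, j \notin S :\ p -> C j l = 0.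
  by move=> Cp0 CS j l; rewrite in_setD1 negb_and negbK => /orP[/eqP-> | /CS->].
have [Bpp0 | Bpp_neq0] := eqVneq (B p p) 0.
  by apply: (IH _ cardSp) => //; apply: suppSp => //; exact: psd_form_row_eq0.
have Bpp_gt0 : 0 < B p p by rewrite lt0r Bpp_neq0 psd_form_diag_ge0.
have [s Es] : exists s : seq {ffun 'I_n -> R},
    forall j l, schur_compl B p j l = \sum_(v <- s) v j * v l.
  apply: (IH _ cardSp); [exact: schur_compl_sym | exact: schur_compl_psd |].
  apply: suppSp; first exact: schur_compl_pivot_row.
  by move=> j l jS; apply: schur_compl_zero_row => // l'; exact: suppB.
by exists (pivot_vec B p :: s) => j l; rewrite big_cons -Es /schur_compl addrC subrK.
Qed.

Lemma psd_form_gram B : symmetric_form B -> psd_form B ->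
  exists s : seq {ffun 'I_n -> R}, forall j l, B j l = \sum_(v <- s) v j * v l.
Proof.
by move=> sB psdB; apply: (@psd_form_gram_support [set: 'I_n]%SET) => // j l; rewrite inE.
Qed.

Definition schur_prod B C j l := B j l * C j l.

Lemma qform_schur_prod_gram A C (s : seq {ffun 'I_n -> R}) :
  (forall j l, C j l = \sum_(v <- s) v j * v l) -> forall x,
  qform (schur_prod A C) x = \sum_(v <- s) qform A (fun k => x k * v k).
Proof.
move=> EC x; rewrite /qform /bform [RHS]exchange_big; apply: eq_bigr => j _.
rewrite [RHS]exchange_big; apply: eq_bigr => l _.
by rewrite /schur_prod EC mulr_sumr !mulr_suml; apply: eq_bigr => v _; ring.
Qed.

Lemma psd_form_schur_prod A C : psd_form A -> symmetric_form C -> psd_form C ->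
  psd_form (schur_prod A C).
Proof.
move=> psdA sC psdC x; have [s Es] := psd_form_gram C sC psdC.
by rewrite (qform_schur_prod_gram A C s Es); apply: sumr_ge0.
Qed.

Lemma pd_form_schur_prod A C : pd_form A -> symmetric_form C -> psd_form C ->
  (forall j, 0 < C j j) -> pd_form (schur_prod A C).
Proof.
move=> pdA sC psdC C_diag x x_neq0; have [s Es] := psd_form_gram C sC psdC.
have [j xj_neq0] : exists j, x j != 0.
  apply/existsP; apply: contraNT x_neq0 => /existsPn x0.
  by apply/eqP/funext => k; apply/eqP/negPn/x0.
have psdA := pd_form_psd A pdA.
rewrite (qform_schur_prod_gram A C s Es) lt0r sumr_ge0 // andbT psumr_neq0 //.
have := C_diag j; rewrite Es lt0r psumr_neq0 => [/andP[+ _] | v _]; last first.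
  by rewrite -expr2 sqr_ge0.
apply: sub_has => v /andP[_ vj_gt0]; rewrite /= pdA //.
apply: contraTneq vj_gt0 => /(congr1 (@^~ j)) /= /eqP.
by rewrite mulf_eq0 (negbTE xj_neq0) /= => /eqP->; rewrite mul0r ltxx.
Qed.

End QuadraticForms.

Section Order3Tensors.
Context {R : realType} {n : nat}.
Implicit Types (A : tensor R 3 n) (i j l : 'I_n).

Definition idx3 i j l : {ffun 'I_3 -> 'I_n} :=
  [ffun k : 'I_3 => if val k == 0%N then i else if val k == 1%N then j else l].
Definition slice A i j l := A (idx3 i j l).

Lemma tvec3_qform A x i : tvec A x i = qform (slice A i) x.
Proof.
rewrite /tvec /qform /bform pair_bigA.
rewrite (reindex_onto (fun p => idx3 i p.1 p.2)
  (fun f => (f (@Ordinal 3 1 isT), f (@Ordinal 3 2 isT)))) /=.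
  apply: eq_big => [[j l] | [j l] _] /=.
    rewrite !ffunE /= !eqxx andbT.
    by apply/forallP => k; apply/implyP => k0; rewrite ffunE k0.
  by rewrite big_mkcond !big_ord_recl big_ord0 !ffunE /= mul1r mulr1.
move=> f /forallP /(_ ord0) /implyP /(_ isT) /eqP fi.
apply/ffunP => -[[|[|[|k]]] ltk3] //; rewrite ffunE /=.
- by rewrite -fi; congr (f _); exact: val_inj.
- by congr (f _); exact: val_inj.
- by congr (f _); exact: val_inj.
Qed.

Lemma slice_sym A i : symmetric_tensor A -> symmetric_form (slice A i).
Proof.
move=> sA j l; rewrite /slice.
rewrite -(sA (tperm (@Ordinal 3 1 isT) (@Ordinal 3 2 isT)) (idx3 i j l)).
by congr A; apply/ffunP => -[[|[|[|k]]] ltk3] //; rewrite !ffunE permE.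
Qed.

End Order3Tensors.

Section SPSDCone.
Context {R : realType} {m n : nat}.
Implicit Types (A B : tensor R m n) (x : 'I_n -> R) (i : 'I_n).
Local Notation tensor_space := {ptws {ffun 'I_m -> 'I_n} -> R}.
Local Open Scope classical_set_scope.

Lemma tvecD A B x i : tvec (fun f => A f + B f) x i = tvec A x i + tvec B x i.
Proof. by rewrite /tvec -big_split; apply: eq_bigr => f _; rewrite mulrDl. Qed.

Lemma tvecZ (c : R) A x i : tvec (fun f => c * A f) x i = c * tvec A x i.
Proof. by rewrite /tvec mulr_sumr; apply: eq_bigr => f _; rewrite mulrA. Qed.

Lemma SPSD_add A B : SPSD R m n A -> SPSD R m n B -> SPSD R m n (fun f => A f + B f).
Proof.
move=> [sA psdA] [sB psdB]; split=> [s f | x i]; first by rewrite sA sB.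
by rewrite tvecD addr_ge0.
Qed.

Lemma SPSD_scale (c : R) A : 0 <= c -> SPSD R m n A -> SPSD R m n (fun f => c * A f).
Proof.
move=> c_ge0 [sA psdA]; split=> [s f | x i]; first by rewrite sA.
by rewrite tvecZ mulr_ge0.
Qed.

Lemma eval_continuous (f : {ffun 'I_m -> 'I_n}) :
  continuous (fun A : tensor_space => A f).
Proof. exact: (@proj_continuous _ (fun _ => R) f). Qed.

Lemma tvec_continuous x i : continuous (fun A : tensor_space => tvec A x i).
Proof.
rewrite /tvec; apply: (@continuous_big _ _ +%R 0 _ add_continuous) => f _ A.
set c := \prod_(k | _) _.
exact: (@cvgMr_tmp R _ (nbhs A) _ (fun B : tensor_space => B f) (A f) c
  (eval_continuous f A)).
Qed.

Lemma closed_symmetric_tensor : closed [set A : tensor_space | symmetric_tensor A].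
Proof.
have -> : [set A : tensor_space | symmetric_tensor A] =
    \bigcap_(p in [set: 'S_m * {ffun 'I_m -> 'I_n}])
      (fun A : tensor_space => A [ffun k => p.2 (p.1 k)] - A p.2) @^-1` [set 0].
  apply/seteqP; split=> [A sA [s f] _ | A sA s f] /=; first by rewrite sA subrr.
  by apply/eqP; rewrite -subr_eq0; apply/eqP; exact: (sA (s, f)).
apply: closed_bigI => -[s f] _; apply: preimage_closed; last exact: closed_eq.
by move=> A _; apply: continuousB; exact: eval_continuous.
Qed.

Lemma closed_tvec_ge0 : closed [set A : tensor_space | forall x i, 0 <= tvec A x i].
Proof.
have -> : [set A : tensor_space | forall x i, 0 <= tvec A x i] =
    \bigcap_(q in [set: ('I_n -> R) * 'I_n])
      (fun A : tensor_space => tvec A q.1 q.2) @^-1` [set z | 0 <= z].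
  by apply/seteqP; split=> [A psdA [x i] _ | A psdA x i] //=; exact: (psdA (x, i)).
apply: closed_bigI => -[x i] _; apply: preimage_closed; last exact: closed_ge.
by move=> A _; exact: tvec_continuous.
Qed.

Lemma SPSD_closed : closed (SPSD R m n : set tensor_space).
Proof. exact: closedI closed_symmetric_tensor closed_tvec_ge0. Qed.

End SPSDCone.

Section Order3Hadamard.
Context {R : realType} {n : nat}.
Implicit Types (A B : tensor R 3 n).

Lemma SPSD3_slice_psd A i : SPSD R 3 n A -> psd_form (slice A i).
Proof. by move=> [_ psdA] x; rewrite -tvec3_qform. Qed.

Lemma SPD3_slice_pd A i : SPD R 3 n A -> pd_form (slice A i).
Proof. by move=> [_ pdA] x x_neq0; rewrite -tvec3_qform; exact: pdA. Qed.

Lemma SPSD3_hadamard A B : SPSD R 3 n A -> SPSD R 3 n B -> SPSD R 3 n (hadamard A B).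
Proof.
move=> SA SB; split=> [s f | x i]; first by rewrite /hadamard SA.1 SB.1.
rewrite tvec3_qform; apply: psd_form_schur_prod; last exact: SPSD3_slice_psd.
  exact: SPSD3_slice_psd.
by apply: slice_sym; case: SB.
Qed.

Lemma SPD3_hadamard A B : SPD R 3 n A -> SPD R 3 n B -> SPD R 3 n (hadamard A B).
Proof.
move=> SA SB; split=> [s f | x x_neq0 i]; first by rewrite /hadamard SA.1 SB.1.
have pdB : pd_form (slice B i) by exact: SPD3_slice_pd.
rewrite tvec3_qform; apply: pd_form_schur_prod x_neq0.
- exact: SPD3_slice_pd.
- by apply: slice_sym; case: SB.
- exact: pd_form_psd.
- by move=> j; exact: (pd_form_diag_gt0 (slice B i) j pdB).
Qed.

End Order3Hadamard.

Theorem theorem3p9 (R : realType) :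
  (forall m n : nat, odd m -> (3 <= m)%N -> (2 <= n)%N ->
     @closed {ptws {ffun 'I_m -> 'I_n} -> R} (SPSD R m n) /\
     (forall A B : tensor R m n, SPSD R m n A -> SPSD R m n B ->
        SPSD R m n (fun f => A f + B f)) /\
     (forall (c : R) (A : tensor R m n), 0 <= c -> SPSD R m n A ->
        SPSD R m n (fun f => c * A f))) /\
  (forall n : nat, (2 <= n)%N ->
     (forall A B : tensor R 3 n, SPSD R 3 n A -> SPSD R 3 n B ->
        SPSD R 3 n (hadamard A B)) /\
     (forall A B : tensor R 3 n, SPD R 3 n A -> SPD R 3 n B ->
        SPD R 3 n (hadamard A B))).
Proof.
split=> [m n _ _ _ | n _].
  by split; [exact: SPSD_closed | split; [exact: SPSD_add | exact: SPSD_scale]].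
by split; [exact: SPSD3_hadamard | exact: SPD3_hadamard].
Qed.
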